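(* Let $\mathbb T$ be a geometric theory over $\Sigma$, $\mathbb X=(X_1\rightrightarrows X_0)$ a small groupoid and $p:\mathbb X\to\mathbb T\text{-}\mathbf{Mod}(\mathbf{Set})$ a functor with an $I$-indexing of $(\mathbb X,p)$. If $(\mathbb X,p)$ eliminates parameters, then $\mathbb X^{\log}=(X_1^{\tau_1^{\log}}\rightrightarrows X_0^{\tau_0^{\log}})$ is an open topological groupoid.
   Context: Indexings and definables. Let $\Sigma$ be a (possibly many-sorted) first-order signature and $\mathbb T$ a geometric theory over $\Sigma$; $\mathbb T\text{-}\mathbf{Mod}(\mathbf{Set})$ is the category of set-based models and homomorphisms. Given, for each sort $k$ of $\Sigma$, a set $I_k$ (the parameters of sort $k$; write $I=(I_k)_k$), an $I$-indexing of a $\Sigma$-structure $M$ is, for each sort $k$, a partial surjection from $I_k$ onto the interpretation $M_k$ of sort $k$ (i.e. a subset $I'_k\subseteq I_k$ and a surjection $I'_k\to M_k$); parameters in $I'_k$ are said to be interpreted in $M$, and we also write $m$ for the element of $M$ denoted by a parameter $m$. Given a small groupoid $\mathbb X=(X_1\rightrightarrows X_0)$ and a functor $p:\mathbb X\to\mathbb T\text{-}\mathbf{Mod}(\mathbf{Set})$, an $I$-indexing of $(\mathbb X,p)$ is a choice of an $I$-indexing of $p(x)$ for each $x\in X_0$ (different models may share parameters). For a geometric formula $\varphi$ over $\Sigma$ in context $\vec x$, $[\![\vec x:\varphi]\!]_{\mathbb X}=\{\langle\vec n,x\rangle: x\in X_0,\ \vec n\text{ a tuple of }p(x),\ p(x)\models\varphi(\vec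 n)\}$. For a tuple of parameters $\vec m$ and a geometric formula $\psi(\vec x,\vec y)$, $[\![\vec x,\vec m:\psi]\!]_{\mathbb X}=\{\langle\vec n,x\rangle: \vec m\text{ is interpreted in }p(x),\ p(x)\models\psi(\vec n,\vec m)\}$, and its orbit is $\overline{[\![\vec x,\vec m:\psi]\!]}_{\mathbb X}=\{\langle\vec n,y\rangle:\exists\,(\alpha:x\to y)\in X_1\text{ with }\langle p(\alpha)^{-1}(\vec n),x\rangle\in[\![\vec x,\vec m:\psi]\!]_{\mathbb X}\}$. The pair $(\mathbb X,p)$ eliminates parameters if for every tuple of parameters $\vec m$ and every geometric formula $\psi$ there is a geometric formula $\varphi$ over $\Sigma$ without parameters in context $\vec x$ with $\overline{[\![\vec x,\vec m:\psi]\!]}_{\mathbb X}=[\![\vec x:\varphi]\!]_{\mathbb X}$. Logical topologies. The logical topology on objects $\tau_0^{\log}$ on $X_0$ is generated by the sets $[\![\vec m:\varphi]\!]_{\mathbb X}=\{x\in X_0:\vec m\text{ interpreted in }p(x),\ p(x)\models\varphi(\vec m)\}$, for tuples of parameters $\vec m$ and geometric formulae $\varphi$. The logical topology on arrows $\tau_1^{\log}$ on $X_1$ is generated by the sets of all $(\alpha:x\to y)\in X_1$ such that $\vec a,\vec b$ are interpreted in $p(x)$, $\vec c,\vec d$ are interpreted in $p(y)$, $p(x)\models\varphi(\vec a)$, $p(\alpha)(\vec b)=\vec c$ and $p(y)\models\psi(\vec d)$, for tuples of parameters $\vec a,\vec b,\vec c,\vec d$ and geometric formulae $\varphi,\psi$.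 With these topologies $\mathbb X$ is a topological groupoid (all structure maps continuous), denoted $\mathbb X^{\log}$. A topological groupoid is open if its source map is open. *)

From Stdlib Require Import List.
Import ListNotations.

Record signature := {
  sort : Type;
  funsym : Type;
  relsym : Type;
  fdom : funsym -> list sort;
  fcod : funsym -> sort;
  rdom : relsym -> list sort
}.

Section Syntax.
Context {Sg : signature}.
Local Notation S := (sort Sg).

Inductive hlist (A : S -> Type) : list S -> Type :=
| hnil : hlist A []
| hcons : forall s l, A s -> hlist A l -> hlist A (s :: l).
Arguments hnil {A}.
Arguments hcons {A s l} _ _.

Definition hhead {A s l} (h : hlist A (s :: l)) : A s :=
  match h in hlist _ l0 return match l0 with [] => unit | s' :: _ => A s' end with
  | hnil => tt
  | hcons a _ => a
  end.

Definition htail {A s l} (h : hlist A (s :: l)) : hlist A l :=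
  match h in hlist _ l0 return match l0 with [] => unit | _ :: l' => hlist A l' end with
  | hnil => tt
  | hcons _ t => t
  end.

Fixpoint hmap {A B : S -> Type} (f : forall s, A s -> B s) {l} (h : hlist A l) : hlist B l :=
  match h with
  | hnil => hnil
  | hcons a t => hcons (f _ a) (hmap f t)
  end.

Fixpoint happ {A : S -> Type} {l1 l2} (h1 : hlist A l1) (h2 : hlist A l2) : hlist A (l1 ++ l2) :=
  match h1 in hlist _ l return hlist A (l ++ l2) with
  | hnil => h2
  | hcons a t => hcons a (happ t h2)
  end.

Fixpoint hseq {A : S -> Type} {l} (h : hlist (fun s => option (A s)) l) : option (hlist A l) :=
  match h with
  | hnil => Some hnil
  | hcons oa t =>
      match oa, hseq t with
      | Some a, Some t' => Some (hcons a t')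
      | _, _ => None
      end
  end.

Inductive var : list S -> S -> Type :=
| vz : forall s l, var (s :: l) s
| vs : forall s t l, var l s -> var (t :: l) s.

Fixpoint hget {A : S -> Type} {l s} (v : var l s) : hlist A l -> A s :=
  match v in var l0 s0 return hlist A l0 -> A s0 with
  | vz _ _ => fun h => hhead h
  | vs _ _ _ v' => fun h => hget v' (htail h)
  end.

Inductive term (G : list S) : S -> Type :=
| tvar : forall s, var G s -> term G s
| tapp : forall f : funsym Sg, terms G (fdom Sg f) -> term G (fcod Sg f)
with terms (G : list S) : list S -> Type :=
| tnil : terms G []
| tcons : forall s l, term G s -> terms G l -> terms G (s :: l).

(* geometric formulas in context G: atomic formulas, truth, binary
   conjunction, arbitrary (set-indexed, possibly empty) disjunction,
   existential quantification. Falsity is the empty disjunction. *)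
Inductive formula : list S -> Type :=
| fTop : forall G, formula G
| fRel : forall G (r : relsym Sg), terms G (rdom Sg r) -> formula G
| fEq : forall G s, term G s -> term G s -> formula G
| fAnd : forall G, formula G -> formula G -> formula G
| fOr : forall G (J : Type), (J -> formula G) -> formula G
| fEx : forall G s, formula (s :: G) -> formula G.

End Syntax.

Arguments hnil {Sg A}.
Arguments hcons {Sg A s l} _ _.
Arguments tvar {Sg G s} _.
Arguments tapp {Sg G} _ _.
Arguments tnil {Sg G}.
Arguments tcons {Sg G s l} _ _.
Arguments fTop {Sg G}.
Arguments fRel {Sg G} _ _.
Arguments fEq {Sg G s} _ _.
Arguments fAnd {Sg G} _ _.
Arguments fOr {Sg G J} _.
Arguments fEx {Sg G s} _.

Record structure (Sg : signature) := {
  car : sort Sg -> Type;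
  fint : forall f : funsym Sg, hlist car (fdom Sg f) -> car (fcod Sg f);
  rint : forall r : relsym Sg, hlist car (rdom Sg r) -> Prop
}.
Arguments car {Sg} _ _.
Arguments fint {Sg} _ _ _.
Arguments rint {Sg} _ _ _.

Section Semantics.
Context {Sg : signature} (M : structure Sg).

Fixpoint teval {G s} (e : hlist (car M) G) (t : term G s) : car M s :=
  match t with
  | tvar v => hget v e
  | tapp f ts => fint M f (tseval e ts)
  end
with tseval {G l} (e : hlist (car M) G) (ts : terms G l) : hlist (car M) l :=
  match ts with
  | tnil => hnil
  | tcons t ts' => hcons (teval e t) (tseval e ts')
  end.

Fixpoint sat {G} (phi : formula G) : hlist (car M) G -> Prop :=
  match phi in formula G0 return hlist (car M) G0 -> Prop with
  | fTop => fun _ => True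
  | fRel r ts => fun e => rint M r (tseval e ts)
  | fEq t u => fun e => teval e t = teval e u
  | fAnd a b => fun e => sat a e /\ sat b e
  | fOr F => fun e => exists j, sat (F j) e
  | @fEx _ _ s a => fun e => exists x : car M s, sat a (hcons x e)
  end.
End Semantics.

(* A geometric theory: a set of geometric sequents  phi |-_G psi. *)
Definition theory (Sg : signature) := forall G, formula (Sg:=Sg) G -> formula G -> Prop.

Definition is_model {Sg} (T : theory Sg) (M : structure Sg) : Prop :=
  forall G phi psi, T G phi psi -> forall e : hlist (car M) G, sat M phi e -> sat M psi e.

Definition is_hom {Sg} (M N : structure Sg) (h : forall s, car M s -> car N s) : Prop :=
  (forall f (a : hlist (car M) (fdom Sg f)), h _ (fint M f a) = fint N f (hmap h a)) /\
  (forall r (a : hlist (car M) (rdom Sg r)), rint M r a -> rint N r (hmap h a)).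

Record groupoid := {
  obj : Type;
  hom : obj -> obj -> Type;
  gid : forall x, hom x x;
  gcomp : forall x y z, hom x y -> hom y z -> hom x z;   (* diagrammatic order: first, then *)
  ginv : forall x y, hom x y -> hom y x;
  gcomp_id_l : forall x y (f : hom x y), gcomp x x y (gid x) f = f;
  gcomp_id_r : forall x y (f : hom x y), gcomp x y y f (gid y) = f;
  gcomp_assoc : forall x y z w (f : hom x y) (g : hom y z) (h : hom z w),
      gcomp x z w (gcomp x y z f g) h = gcomp x y w f (gcomp y z w g h);
  ginv_r : forall x y (f : hom x y), gcomp x y x f (ginv x y f) = gid x;
  ginv_l : forall x y (f : hom x y), gcomp y x y (ginv x y f) f = gid y
}.
Arguments gid {X} x : rename.
Arguments gcomp {X x y z} _ _ : rename.
Arguments ginv {X x y} _ : rename.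

Definition arr (X : groupoid) := { x : obj X & { y : obj X & hom X x y } }.
Definition asrc {X} (a : arr X) : obj X := projT1 a.
Definition atgt {X} (a : arr X) : obj X := projT1 (projT2 a).
Definition ahom {X} (a : arr X) : hom X (asrc a) (atgt a) := projT2 (projT2 a).
Definition mkarr {X} {x y : obj X} (f : hom X x y) : arr X := existT _ x (existT _ y f).
Definition aid {X} (x : obj X) : arr X := mkarr (gid x).
Definition ainv {X} (a : arr X) : arr X := mkarr (ginv (ahom a)).
Definition cpairs (X : groupoid) :=
  { x : obj X & { y : obj X & { z : obj X & (hom X x y * hom X y z)%type } } }.
Definition cfst {X} (c : cpairs X) : arr X :=
  mkarr (fst (projT2 (projT2 (projT2 c)))).
Definition csnd {X} (c : cpairs X) : arr X :=
  mkarr (snd (projT2 (projT2 (projT2 c)))).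
Definition ccomp {X} (c : cpairs X) : arr X :=
  mkarr (gcomp (fst (projT2 (projT2 (projT2 c)))) (snd (projT2 (projT2 (projT2 c))))).

Record TModFunctor {Sg} (T : theory Sg) (X : groupoid) := {
  pobj : obj X -> structure Sg;
  pmodel : forall x, is_model T (pobj x);
  parr : forall x y, hom X x y -> forall s, car (pobj x) s -> car (pobj y) s;
  parr_hom : forall x y (f : hom X x y), is_hom (pobj x) (pobj y) (parr x y f);
  parr_id : forall x s (a : car (pobj x) s), parr x x (gid x) s a = a;
  parr_comp : forall x y z (f : hom X x y) (g : hom X y z) s (a : car (pobj x) s),
      parr x z (gcomp f g) s a = parr y z g s (parr x y f s a)
}.
Arguments pobj {Sg T X} _ _.
Arguments parr {Sg T X} _ {x y} _ _ _.

(* An I-indexing of a structure M: for each sort k a partial surjection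
   I_k -> M_k, represented as a function into option (M k) that is
   surjective onto M k; parameters mapped to Some are "interpreted in M". *)
Definition is_indexing {Sg} (I : sort Sg -> Type) (M : structure Sg)
    (ix : forall k, I k -> option (car M k)) : Prop :=
  forall k (a : car M k), exists i, ix k i = Some a.

Record indexing {Sg} {T : theory Sg} {X : groupoid} (I : sort Sg -> Type)
    (p : TModFunctor T X) := {
  ind : forall x k, I k -> option (car (pobj p x) k);
  ind_surj : forall x, is_indexing I (pobj p x) (ind x)
}.
Arguments ind {Sg T X I p} _ _ _ _.

Section Logical.
Context {Sg : signature} {T : theory Sg} {X : groupoid} {I : sort Sg -> Type}
        {p : TModFunctor T X} (ix : indexing I p).

Definition pvals (x : obj X) {D} (m : hlist I D) : option (hlist (car (pobj p x)) D) :=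
  hseq (hmap (ind ix x) m).

Definition param_ext {G D} (m : hlist I D) (psi : formula (G ++ D))
    (x : obj X) (n : hlist (car (pobj p x)) G) : Prop :=
  exists v, pvals x m = Some v /\ sat (pobj p x) psi (happ n v).

Definition param_orbit {G D} (m : hlist I D) (psi : formula (G ++ D))
    (y : obj X) (n : hlist (car (pobj p y)) G) : Prop :=
  exists (x : obj X) (a : hom X x y), param_ext m psi x (hmap (parr p (ginv a)) n).

Definition ext {G} (phi : formula G) (x : obj X) (n : hlist (car (pobj p x)) G) : Prop :=
  sat (pobj p x) phi n.

Definition eliminates_parameters : Prop :=
  forall D (m : hlist I D) G (psi : formula (G ++ D)),
  exists phi : formula G,
    forall y (n : hlist (car (pobj p y)) G), param_orbit m psi y n <-> ext phi y n.

Definition obj_ext {D} (m : hlist I D) (phi : formula D) (x : obj X) : Prop :=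
  exists v, pvals x m = Some v /\ sat (pobj p x) phi v.

Definition log0_basic (U : obj X -> Prop) : Prop :=
  exists D (m : hlist I D) (phi : formula D), forall x, U x <-> obj_ext m phi x.

Definition log1_basic (U : arr X -> Prop) : Prop :=
  exists Da Db Dd (a : hlist I Da) (b c : hlist I Db) (d : hlist I Dd)
         (phi : formula Da) (psi : formula Dd),
  forall e : arr X, U e <->
    (obj_ext a phi (asrc e) /\
     (exists vb vc, pvals (asrc e) b = Some vb /\ pvals (atgt e) c = Some vc /\
                    hmap (parr p (ahom e)) vb = vc) /\
     obj_ext d psi (atgt e)).
End Logical.

Inductive gen_open {T : Type} (B : (T -> Prop) -> Prop) : (T -> Prop) -> Prop :=
| go_basic : forall U, B U -> gen_open B U
| go_full : gen_open B (fun _ => True)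
| go_inter : forall U V, gen_open B U -> gen_open B V -> gen_open B (fun t => U t /\ V t)
| go_union : forall (J : Type) (F : J -> T -> Prop),
    (forall j, gen_open B (F j)) -> gen_open B (fun t => exists j, F j t)
| go_ext : forall U V, (forall t, U t <-> V t) -> gen_open B U -> gen_open B V.

Definition continuous {A B : Type} (OA : (A -> Prop) -> Prop) (OB : (B -> Prop) -> Prop)
    (f : A -> B) : Prop :=
  forall V, OB V -> OA (fun a => V (f a)).

Definition open_map {A B : Type} (OA : (A -> Prop) -> Prop) (OB : (B -> Prop) -> Prop)
    (f : A -> B) : Prop :=
  forall U, OA U -> OB (fun b => exists a, U a /\ f a = b).

(* topology on composable pairs: subspace of the product topology on X_1 x X_1 *)
Definition cpairs_open {X : groupoid} (O1 : (arr X -> Prop) -> Prop) :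
    (cpairs X -> Prop) -> Prop :=
  gen_open (fun W => exists U V, O1 U /\ O1 V /\
                     forall c, W c <-> (U (cfst c) /\ V (csnd c))).

Definition open_topological_groupoid (X : groupoid)
    (O0 : (obj X -> Prop) -> Prop) (O1 : (arr X -> Prop) -> Prop) : Prop :=
  continuous O1 O0 asrc /\ continuous O1 O0 atgt /\ continuous O0 O1 aid /\
  continuous O1 O1 ainv /\ continuous (cpairs_open O1) O1 ccomp /\
  open_map O1 O0 asrc.

Definition tau0_log {Sg T X I p} (ix : @indexing Sg T X I p) := gen_open (log0_basic ix).
Definition tau1_log {Sg T X I p} (ix : @indexing Sg T X I p) := gen_open (log1_basic ix).

From Stdlib Require Import List.
Import ListNotations.

(* Preimages of basic opens under the structure maps are again (unions of) basic
   opens: for identities, "p(1_x) carries b to c" is the definable equation b = c;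
   inverses swap the source and target data; and p(f;g) carries b to c iff some
   tuple m (which exists since indexings are onto) is carried to by f and from by g.
   For openness of the source map it suffices to treat basic opens, whose source
   image is { x | x |= phi(a) } intersected with the set of x where b lies in the
   orbit of the points named c in models satisfying psi(d); elimination of
   parameters makes this orbit definable without parameters. *)

Section GeneratedTopology.
Context {A B : Type}.

Lemma continuous_gen_open (BA : (A -> Prop) -> Prop) (BB : (B -> Prop) -> Prop) (f : A -> B) :
  (forall V, BB V -> gen_open BA (fun a => V (f a))) ->
  continuous (gen_open BA) (gen_open BB) f.
Proof.
  intros Hf V HV. induction HV as [V HV | | U V _ IHU _ IHV | J F _ IHF | U V HUV _ IHU].
  - now apply Hf.
  - apply go_full.
  - now apply go_inter.
  - now apply (go_union _ J (fun j a => F j (f a))).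
  - apply (go_ext _ _ _ (fun a => HUV (f a)) IHU).
Qed.

Section Subbasis.
Variable BA : (A -> Prop) -> Prop.
Hypothesis basic_full : BA (fun _ => True).
Hypothesis basic_inter : forall U V, BA U -> BA V -> BA (fun a => U a /\ V a).

Lemma gen_open_nbhd U : gen_open BA U -> forall a, U a ->
  exists W, BA W /\ W a /\ (forall a', W a' -> U a').
Proof.
  induction 1 as [U HU | | U V _ IHU _ IHV | J F _ IHF | U V HUV _ IHU]; intros a Ha.
  - now exists U.
  - now exists (fun _ => True).
  - destruct (IHU a (proj1 Ha)) as (W1 & B1 & W1a & S1).
    destruct (IHV a (proj2 Ha)) as (W2 & B2 & W2a & S2).
    exists (fun a => W1 a /\ W2 a). split; [now apply basic_inter|].
    split; [easy|]. intros a' [? ?]; auto.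
  - destruct Ha as [j Hj]. destruct (IHF j a Hj) as (W & BW & Wa & SW).
    exists W. split; [easy|]. split; [easy|]. intros a' Ha'. exists j; auto.
  - destruct (IHU a (proj2 (HUV a) Ha)) as (W & BW & Wa & SW).
    exists W. split; [easy|]. split; [easy|]. intros a' Ha'. now apply HUV, SW.
Qed.

Lemma open_map_gen_open (BB : (B -> Prop) -> Prop) (f : A -> B) :
  (forall W, BA W -> gen_open BB (fun b => exists a, W a /\ f a = b)) ->
  open_map (gen_open BA) (gen_open BB) f.
Proof.
  intros Himg U HU.
  set (J := { W : A -> Prop | BA W /\ (forall a, W a -> U a) }).
  apply (go_ext _ (fun b => exists j : J, exists a, proj1_sig j a /\ f a = b)).
  - intro b. split.
    + intros [[W [BW SW]] (a & Wa & Hb)]. exists a. split; auto.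
    + intros (a & Ua & <-). destruct (gen_open_nbhd U HU a Ua) as (W & BW & Wa & SW).
      now exists (exist _ W (conj BW SW)), a.
  - apply go_union. intros [W [BW SW]]. now apply Himg.
Qed.

End Subbasis.
End GeneratedTopology.

Section Syntax.
Context {Sg : signature}.
Local Notation S := (sort Sg).

Lemma hlist_cons_eta {A : S -> Type} {s l} (h : hlist A (s :: l)) :
  h = hcons (hhead h) (htail h).
Proof.
  refine (match h in hlist _ l0 return
            match l0 return hlist A l0 -> Prop with
            | [] => fun _ => True
            | _ :: _ => fun h0 => h0 = hcons (hhead h0) (htail h0) end h with
          | hnil => I | hcons a t => eq_refl end).
Qed.

Lemma hlist_nil_eta {A : S -> Type} (h : hlist A []) : h = hnil.
Proof.
  refine (match h in hlist _ l0 return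
            match l0 return hlist A l0 -> Prop with
            | [] => fun h0 => h0 = hnil
            | _ :: _ => fun _ => True end h with
          | hnil => eq_refl | hcons a t => I end).
Qed.

Lemma var_nil_empty {s : S} (v : var [] s) : False.
Proof.
  refine (match v in var l s0 return match l with [] => False | _ => True end with
          | vz _ _ => I | vs _ _ _ _ => I end).
Qed.

Lemma var_cons_ind {t : S} {D : list S} (P : forall s, var (t :: D) s -> Prop) :
  P t (vz t D) -> (forall s v, P s (vs s t D v)) -> forall s v, P s v.
Proof.
  intros Hz Hs s v. revert P Hz Hs.
  refine (match v as v0 in var l s0 return
            match l return var l s0 -> Prop with
            | [] => fun _ => True
            | t0 :: D0 => fun v1 => forall P : forall s, var (t0 :: D0) s -> Prop,
                 P t0 (vz t0 D0) -> (forall s w, P s (vs s t0 D0 w)) -> P s0 v1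
            end v0 with
          | vz s0 l0 => fun P Hz Hs => Hz
          | vs s0 t0 l0 w => fun P Hz Hs => Hs s0 w
          end).
Qed.

Lemma hlist_ext {A : S -> Type} l (u w : hlist A l) :
  (forall s (v : var l s), hget v u = hget v w) -> u = w.
Proof.
  revert w; induction u as [|s l a u IH]; intros w H.
  - now rewrite (hlist_nil_eta w).
  - rewrite (hlist_cons_eta w). f_equal.
    + exact (H _ (vz _ _)).
    + apply IH. intros s' v. exact (H _ (vs _ _ _ v)).
Qed.

Lemma hmap_happ {A B : S -> Type} (f : forall s, A s -> B s) l1 l2
  (h1 : hlist A l1) (h2 : hlist A l2) :
  hmap f (happ h1 h2) = happ (hmap f h1) (hmap f h2).
Proof. induction h1 as [|s l a h1 IH]; simpl; now rewrite ?IH. Qed.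

Lemma hseq_happ {A : S -> Type} l1 l2 (o1 : hlist (fun s => option (A s)) l1)
  (o2 : hlist _ l2) :
  hseq (happ o1 o2) =
  match hseq o1, hseq o2 with Some a, Some b => Some (happ a b) | _, _ => None end.
Proof.
  induction o1 as [|s l oa o1 IH]; simpl.
  - now destruct (hseq o2).
  - rewrite IH. destruct oa, (hseq o1), (hseq o2); reflexivity.
Qed.

Lemma happ_inj {A : S -> Type} l1 l2 (u u' : hlist A l1) (v v' : hlist A l2) :
  happ u v = happ u' v' -> u = u' /\ v = v'.
Proof.
  revert u'; induction u as [|s l a u IH]; intros u' H.
  - rewrite (hlist_nil_eta u') in *. auto.
  - rewrite (hlist_cons_eta u') in *. simpl in H.
    pose proof (f_equal hhead H) as Ehd. pose proof (f_equal htail H) as Etl.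
    destruct (IH _ Etl) as [-> ->]. simpl in Ehd. now rewrite Ehd.
Qed.

Fixpoint vinl {A : list S} {s} (v : var A s) (B : list S) : var (A ++ B) s :=
  match v in var A0 s0 return var (A0 ++ B) s0 with
  | vz s0 l0 => vz s0 (l0 ++ B)
  | vs s0 t0 l0 w => vs s0 t0 (l0 ++ B) (vinl w B)
  end.

Fixpoint vinr (A : list S) {B s} (v : var B s) : var (A ++ B) s :=
  match A return var (A ++ B) s with
  | [] => v
  | t :: A' => vs s t (A' ++ B) (vinr A' v)
  end.

Lemma hget_vinl {A : S -> Type} G D s (v : var G s) (h1 : hlist A G) (h2 : hlist A D) :
  hget (vinl v D) (happ h1 h2) = hget v h1.
Proof.
  revert h1. induction v as [|s t l v IH]; intros h1; rewrite (hlist_cons_eta h1);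
    [reflexivity | apply IH].
Qed.

Lemma hget_vinr {A : S -> Type} G D s (v : var D s) (h1 : hlist A G) (h2 : hlist A D) :
  hget (vinr G v) (happ h1 h2) = hget v h2.
Proof.
  induction G as [|t G IH].
  - now rewrite (hlist_nil_eta h1).
  - rewrite (hlist_cons_eta h1). apply IH.
Qed.

Definition var_lift {G G' : list S} (r : forall s, var G s -> var G' s) (t : S) :
  forall s, var (t :: G) s -> var (t :: G') s :=
  fun s v =>
  match v in var l s0 return
    match l with
    | [] => unit
    | t0 :: G0 => (forall s, var G0 s -> var G' s) -> var (t0 :: G') s0
    end
  with
  | vz s0 l0 => fun _ => vz s0 G'
  | vs s0 t0 l0 w => fun r0 => vs s0 t0 G' (r0 s0 w)
  end r.

Fixpoint trename {G G' : list S} (r : forall s, var G s -> var G' s) {s} (t : term G s)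
  : term G' s :=
  match t in term _ s0 return term G' s0 with
  | tvar v => tvar (r _ v)
  | tapp f ts => tapp f (tsrename r ts)
  end
with tsrename {G G' : list S} (r : forall s, var G s -> var G' s) {l} (ts : terms G l)
  : terms G' l :=
  match ts in terms _ l0 return terms G' l0 with
  | tnil => tnil
  | tcons t ts' => tcons (trename r t) (tsrename r ts')
  end.

Fixpoint frename {G : list S} (phi : formula G) :
  forall G', (forall s, var G s -> var G' s) -> formula G' :=
  match phi in formula G0 return forall G', (forall s, var G0 s -> var G' s) -> formula G' with
  | fTop => fun G' r => fTop
  | fRel rr ts => fun G' r => fRel rr (tsrename r ts)
  | fEq t u => fun G' r => fEq (trename r t) (trename r u)
  | fAnd a b => fun G' r => fAnd (frename a G' r) (frename b G' r)
  | fOr F => fun G' r => fOr (fun j => frename (F j) G' r)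
  | fEx a => fun G' r => fEx (frename a _ (var_lift r _))
  end.

Scheme term_mind := Induction for term Sort Prop
  with terms_mind := Induction for terms Sort Prop.
Combined Scheme term_terms_ind from term_mind, terms_mind.

Section Rename.
Variables (M : structure Sg) (G G' : list S) (r : forall s, var G s -> var G' s).

Lemma teval_rename (e : hlist (car M) G') (e' : hlist (car M) G) :
  (forall s v, hget (r s v) e = hget v e') ->
  (forall s (t : term G s), teval M e (trename r t) = teval M e' t) /\
  (forall l (ts : terms G l), tseval M e (tsrename r ts) = tseval M e' ts).
Proof.
  intro Hr. apply term_terms_ind; intros; simpl; congruence.
Qed.

End Rename.

Lemma sat_rename (M : structure Sg) G (phi : formula G) :
  forall G' (r : forall s, var G s -> var G' s) e e',
  (forall s v, hget (r s v) e = hget v e') -> (sat M (frename phi G' r) e <-> sat M phi e').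
Proof.
  induction phi as [G | G rr ts | G s t u | G a IHa b IHb | G J F IHF | G s a IHa];
    intros G' r e e' Hr; simpl.
  - tauto.
  - now rewrite (proj2 (teval_rename M _ _ r e e' Hr)).
  - now rewrite !(proj1 (teval_rename M _ _ r e e' Hr)).
  - now rewrite (IHa _ r e e' Hr), (IHb _ r e e' Hr).
  - split; intros [j Hj]; exists j; now apply (IHF j _ r e e' Hr).
  - assert (Hl : forall x s0 v,
               hget (var_lift r s s0 v) (hcons x e) = hget v (hcons x e')).
    { intro x. apply var_cons_ind; [reflexivity | intros; apply Hr]. }
    split; intros [x Hx]; exists x; now apply (IHa _ _ _ _ (Hl x)).
Qed.

Fixpoint fEqs {G : list S} (D : list S) :
  (forall s, var D s -> var G s) -> (forall s, var D s -> var G s) -> formula G :=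
  match D return (forall s, var D s -> var G s) -> (forall s, var D s -> var G s) -> formula G
  with
  | [] => fun _ _ => fTop
  | t :: D' => fun f g => fAnd (fEq (tvar (f t (vz t D'))) (tvar (g t (vz t D'))))
       (fEqs D' (fun s v => f s (vs s t D' v)) (fun s v => g s (vs s t D' v)))
  end.

Lemma sat_fEqs (M : structure Sg) G D f g (e : hlist (car M) G) :
  sat M (fEqs D f g) e <-> forall s v, hget (f s v) e = hget (g s v) e.
Proof.
  induction D as [|t D IH]; simpl.
  - split; [intros _ s v; destruct (var_nil_empty v) | easy].
  - rewrite IH. split.
    + intros [Hz Hs]. apply var_cons_ind; [exact Hz | intros; apply Hs].
    + intros H; split; [apply H | intros; apply H].
Qed.

Lemma sat_fEqs_eq (M : structure Sg) G D f g (e : hlist (car M) G) (u w : hlist (car M) D) :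
  (forall s v, hget (f s v) e = hget v u) -> (forall s v, hget (g s v) e = hget v w) ->
  sat M (fEqs D f g) e <-> u = w.
Proof.
  intros Hf Hg. rewrite sat_fEqs. split.
  - intro H. apply hlist_ext. intros s v. now rewrite <- Hf, <- Hg.
  - intros -> s v. now rewrite Hf, Hg.
Qed.

End Syntax.

Lemma ginv_ginv (X : groupoid) x y (f : hom X x y) : ginv (ginv f) = f.
Proof.
  rewrite <- (gcomp_id_r X _ _ (ginv (ginv f))), <- (ginv_l X _ _ f), <- gcomp_assoc.
  rewrite (ginv_l X _ _ (ginv f)). apply gcomp_id_l.
Qed.

Section Logical.
Context {Sg : signature} {T : theory Sg} {X : groupoid} {I : sort Sg -> Type}
        {p : TModFunctor T X} (ix : indexing I p).

Lemma hmap_parr_gcomp x y z (f : hom X x y) (g : hom X y z) l (v : hlist (car (pobj p x)) l) :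
  hmap (parr p (gcomp f g)) v = hmap (parr p g) (hmap (parr p f) v).
Proof. induction v as [|s l a v IH]; simpl; now rewrite ?parr_comp, ?IH. Qed.

Lemma hmap_parr_gid x l (v : hlist (car (pobj p x)) l) : hmap (parr p (gid x)) v = v.
Proof. induction v as [|s l a v IH]; simpl; now rewrite ?parr_id, ?IH. Qed.

Lemma hmap_parr_ginvK x y (f : hom X x y) l (v : hlist (car (pobj p x)) l) :
  hmap (parr p (ginv f)) (hmap (parr p f) v) = v.
Proof. now rewrite <- hmap_parr_gcomp, ginv_r, hmap_parr_gid. Qed.

Lemma hmap_parr_Kginv x y (f : hom X x y) l (v : hlist (car (pobj p y)) l) :
  hmap (parr p f) (hmap (parr p (ginv f)) v) = v.
Proof. now rewrite <- hmap_parr_gcomp, ginv_l, hmap_parr_gid. Qed.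

Lemma pvals_happ x D1 D2 (m1 : hlist I D1) (m2 : hlist I D2) v :
  pvals ix x (happ m1 m2) = Some v <->
  exists v1 v2, pvals ix x m1 = Some v1 /\ pvals ix x m2 = Some v2 /\ v = happ v1 v2.
Proof.
  unfold pvals. rewrite hmap_happ, hseq_happ.
  destruct (hseq (hmap (ind ix x) m1)), (hseq (hmap (ind ix x) m2));
    split; try discriminate; try (intros (? & ? & ? & ? & _); discriminate).
  - intros [= <-]. eauto.
  - now intros (? & ? & [= <-] & [= <-] & ->).
Qed.

Lemma pvals_surj x D (w : hlist (car (pobj p x)) D) : exists m, pvals ix x m = Some w.
Proof.
  induction w as [|s l a w [m Hm]].
  - now exists hnil.
  - destruct (ind_surj I p ix x s a) as [i Hi].
    exists (hcons i m). unfold pvals in *. simpl. now rewrite Hi, Hm.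
Qed.

Lemma obj_ext_top x : obj_ext ix (@hnil _ I) fTop x.
Proof. now exists hnil. Qed.

Lemma obj_ext_and x Da Da' (a : hlist I Da) (a' : hlist I Da') phi phi' :
  obj_ext ix (happ a a') (fAnd (frename phi _ (fun s v => vinl v Da'))
                              (frename phi' _ (fun s v => vinr Da v))) x
  <-> obj_ext ix a phi x /\ obj_ext ix a' phi' x.
Proof.
  assert (Hl : forall (v1 : hlist (car (pobj p x)) Da) (v2 : hlist _ Da') s (v : var _ s),
             hget (vinl v Da') (happ v1 v2) = hget v v1) by (intros; apply hget_vinl).
  assert (Hr : forall (v1 : hlist (car (pobj p x)) Da) (v2 : hlist _ Da') s (v : var _ s),
             hget (vinr Da v) (happ v1 v2) = hget v v2) by (intros; apply hget_vinr).
  unfold obj_ext. split.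
  - intros (v & Hv & H1 & H2). apply pvals_happ in Hv as (v1 & v2 & E1 & E2 & ->).
    split; [exists v1 | exists v2]; split; try easy.
    + now apply (sat_rename _ _ _ _ _ _ _ (Hl v1 v2)).
    + now apply (sat_rename _ _ _ _ _ _ _ (Hr v1 v2)).
  - intros [(v1 & E1 & H1) (v2 & E2 & H2)]. exists (happ v1 v2). split.
    + apply pvals_happ. eauto.
    + split.
      * now apply (sat_rename _ _ _ _ _ _ _ (Hl v1 v2)).
      * now apply (sat_rename _ _ _ _ _ _ _ (Hr v1 v2)).
Qed.

Definition carries {x y} (f : hom X x y) {D} (b c : hlist I D) : Prop :=
  exists vb vc, pvals ix x b = Some vb /\ pvals ix y c = Some vc /\ hmap (parr p f) vb = vc.

Lemma carries_nil x y (f : hom X x y) : carries f (@hnil _ I) hnil.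
Proof. now exists hnil, hnil. Qed.

Lemma carries_happ x y (f : hom X x y) Db Db' (b c : hlist I Db) (b' c' : hlist I Db') :
  carries f (happ b b') (happ c c') <-> carries f b c /\ carries f b' c'.
Proof.
  split.
  - intros (vb & vc & Hb & Hc & E).
    apply pvals_happ in Hb as (b1 & b2 & Hb1 & Hb2 & ->).
    apply pvals_happ in Hc as (c1 & c2 & Hc1 & Hc2 & ->).
    rewrite hmap_happ in E. apply happ_inj in E as [E1 E2].
    split; [exists b1, c1 | exists b2, c2]; auto.
  - intros [(b1 & c1 & Hb1 & Hc1 & E1) (b2 & c2 & Hb2 & Hc2 & E2)].
    exists (happ b1 b2), (happ c1 c2).
    split; [|split].
    + apply pvals_happ. eauto.
    + apply pvals_happ. eauto.
    + now rewrite hmap_happ, E1, E2.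
Qed.

Lemma carries_gid x D (b c : hlist I D) :
  carries (gid x) b c <->
  obj_ext ix (happ b c) (fEqs D (fun s v => vinl v D) (fun s v => vinr D v)) x.
Proof.
  unfold carries, obj_ext. setoid_rewrite hmap_parr_gid. split.
  - intros (vb & ? & Hb & Hc & <-). exists (happ vb vb). split.
    + apply pvals_happ. eauto.
    + refine (proj2 (sat_fEqs_eq _ _ _ _ _ _ vb vb _ _) eq_refl);
        intros; [apply hget_vinl | apply hget_vinr].
  - intros (v & Hv & Hs). apply pvals_happ in Hv as (vb & vc & Hb & Hc & ->).
    exists vb, vc. split; [easy | split; [easy|]].
    refine (proj1 (sat_fEqs_eq _ _ _ _ _ _ vb vc _ _) Hs);
      intros; [apply hget_vinl | apply hget_vinr].
Qed.

Lemma carries_ginv x y (f : hom X x y) D (b c : hlist I D) :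
  carries (ginv f) b c <-> carries f c b.
Proof.
  split; intros (vb & vc & Hb & Hc & <-).
  - exists (hmap (parr p (ginv f)) vb), vb. now rewrite hmap_parr_Kginv.
  - exists (hmap (parr p f) vb), vb. now rewrite hmap_parr_ginvK.
Qed.

Lemma carries_gcomp x y z (f : hom X x y) (g : hom X y z) D (b c : hlist I D) :
  carries (gcomp f g) b c <-> exists m, carries f b m /\ carries g m c.
Proof.
  split.
  - intros (vb & vc & Hb & Hc & E).
    destruct (pvals_surj y D (hmap (parr p f) vb)) as [m Hm].
    exists m. split; [exists vb, (hmap (parr p f) vb) | exists (hmap (parr p f) vb), vc];
      rewrite <- ?hmap_parr_gcomp; auto.
  - intros (m & (vb & vm & Hb & Hm & E1) & (vm' & vc & Hm' & Hc & E2)).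
    rewrite Hm in Hm'. injection Hm' as <-.
    exists vb, vc. rewrite hmap_parr_gcomp, E1. auto.
Qed.

End Logical.

Section LogicalTopology.
Context {Sg : signature} {T : theory Sg} {X : groupoid} {I : sort Sg -> Type}
        {p : TModFunctor T X} (ix : indexing I p).

Definition log1_set {Da Db Dd} (a : hlist I Da) (phi : formula Da) (b c : hlist I Db)
    (d : hlist I Dd) (psi : formula Dd) (e : arr X) : Prop :=
  obj_ext ix a phi (asrc e) /\ carries ix (ahom e) b c /\ obj_ext ix d psi (atgt e).

Lemma log1_basicP U : log1_basic ix U <->
  exists Da Db Dd (a : hlist I Da) (b c : hlist I Db) (d : hlist I Dd) phi psi,
    forall e, U e <-> log1_set a phi b c d psi e.
Proof. reflexivity. Qed.

Lemma tau0_log_obj_ext D (m : hlist I D) phi : tau0_log ix (obj_ext ix m phi).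
Proof. apply go_basic. now exists D, m, phi. Qed.

Lemma tau1_log_set Da Db Dd (a : hlist I Da) (b c : hlist I Db) (d : hlist I Dd) phi psi :
  tau1_log ix (log1_set a phi b c d psi).
Proof. apply go_basic. now exists Da, Db, Dd, a, b, c, d, phi, psi. Qed.

Lemma log1_basic_full : log1_basic ix (fun _ => True).
Proof.
  apply log1_basicP. exists [], [], [], hnil, hnil, hnil, hnil, fTop, fTop.
  intro e. split; [intros _ | easy].
  split; [|split]; [apply obj_ext_top | apply carries_nil | apply obj_ext_top].
Qed.

Lemma log1_basic_inter U V :
  log1_basic ix U -> log1_basic ix V -> log1_basic ix (fun e => U e /\ V e).
Proof.
  rewrite !log1_basicP.
  intros (Da & Db & Dd & a & b & c & d & phi & psi & HU)
         (Da' & Db' & Dd' & a' & b' & c' & d' & phi' & psi' & HV).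
  exists (Da ++ Da'), (Db ++ Db'), (Dd ++ Dd'), (happ a a'), (happ b b'), (happ c c'),
    (happ d d'),
    (fAnd (frename phi _ (fun s v => vinl v Da')) (frename phi' _ (fun s v => vinr Da v))),
    (fAnd (frename psi _ (fun s v => vinl v Dd')) (frename psi' _ (fun s v => vinr Dd v))).
  intro e. unfold log1_set in *.
  rewrite HU, HV, !obj_ext_and, carries_happ. tauto.
Qed.

Lemma continuous_asrc : continuous (tau1_log ix) (tau0_log ix) asrc.
Proof.
  apply continuous_gen_open. intros V (D & m & phi & HV).
  apply (go_ext _ (log1_set m phi hnil hnil hnil fTop)); [|apply tau1_log_set].
  intro e. unfold log1_set. rewrite HV.
  pose proof (carries_nil ix _ _ (ahom e)). pose proof (obj_ext_top ix (atgt e)). tauto.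
Qed.

Lemma continuous_atgt : continuous (tau1_log ix) (tau0_log ix) atgt.
Proof.
  apply continuous_gen_open. intros V (D & m & phi & HV).
  apply (go_ext _ (log1_set hnil fTop hnil hnil m phi)); [|apply tau1_log_set].
  intro e. unfold log1_set. rewrite HV.
  pose proof (carries_nil ix _ _ (ahom e)). pose proof (obj_ext_top ix (asrc e)). tauto.
Qed.

Lemma continuous_aid : continuous (tau0_log ix) (tau1_log ix) aid.
Proof.
  apply continuous_gen_open. intros V HV.
  rewrite log1_basicP in HV. destruct HV as (Da & Db & Dd & a & b & c & d & phi & psi & HV).
  apply (go_ext _ (fun x => obj_ext ix a phi x /\
     obj_ext ix (happ b c) (fEqs Db (fun s v => vinl v Db) (fun s v => vinr Db v)) x /\
     obj_ext ix d psi x)).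
  - intro x. rewrite HV. unfold log1_set. cbn [aid mkarr asrc atgt ahom projT1 projT2].
    now rewrite carries_gid.
  - repeat apply go_inter; apply tau0_log_obj_ext.
Qed.

Lemma log1_set_ainv Da Db Dd (a : hlist I Da) (b c : hlist I Db) (d : hlist I Dd) phi psi e :
  log1_set a phi b c d psi (ainv e) <-> log1_set d psi c b a phi e.
Proof.
  destruct e as [x [y f]]. unfold log1_set. cbn. rewrite carries_ginv. tauto.
Qed.

Lemma continuous_ainv : continuous (tau1_log ix) (tau1_log ix) ainv.
Proof.
  apply continuous_gen_open. intros V HV.
  rewrite log1_basicP in HV. destruct HV as (Da & Db & Dd & a & b & c & d & phi & psi & HV).
  apply (go_ext _ (log1_set d psi c b a phi)); [|apply tau1_log_set].
  intro e. now rewrite HV, log1_set_ainv.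
Qed.

Lemma log1_set_ccomp Da Db Dd (a : hlist I Da) (b c : hlist I Db) (d : hlist I Dd)
    phi psi q :
  log1_set a phi b c d psi (ccomp q) <->
  exists m, log1_set a phi b m hnil fTop (cfst q) /\ log1_set hnil fTop m c d psi (csnd q).
Proof.
  destruct q as [x [y [z [f g]]]]. unfold log1_set. cbn. rewrite carries_gcomp.
  pose proof (obj_ext_top ix x). pose proof (obj_ext_top ix y).
  pose proof (obj_ext_top ix z). firstorder.
Qed.

Lemma continuous_ccomp : continuous (cpairs_open (tau1_log ix)) (tau1_log ix) ccomp.
Proof.
  apply continuous_gen_open. intros V HV.
  rewrite log1_basicP in HV. destruct HV as (Da & Db & Dd & a & b & c & d & phi & psi & HV).
  apply (go_ext _ (fun q => exists m, log1_set a phi b m hnil fTop (cfst q) /\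
                                      log1_set hnil fTop m c d psi (csnd q))).
  - intro q. now rewrite HV, log1_set_ccomp.
  - apply go_union. intro m. apply go_basic.
    exists (log1_set a phi b m hnil fTop), (log1_set hnil fTop m c d psi).
    split; [apply tau1_log_set | split; [apply tau1_log_set | easy]].
Qed.

(* Context: free variables of sorts [Db], then parameter slots for [c] and [d];
   the formula says that the free variables equal [c] and that [psi(d)] holds. *)
Definition at_params_formula (Db : list (sort Sg)) {Dd} (psi : formula (Sg:=Sg) Dd) : formula (Db ++ (Db ++ Dd)) :=
  fAnd (fEqs Db (fun s v => vinl v (Db ++ Dd)) (fun s v => vinr Db (vinl v Dd)))
       (frename psi _ (fun s v => vinr Db (vinr Db v))).

Lemma param_orbit_at_params Db Dd (c : hlist I Db) (d : hlist I Dd) psi x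
    (n : hlist (car (pobj p x)) Db) :
  param_orbit ix (happ c d) (at_params_formula Db psi) x n <->
  exists y (f : hom X x y), pvals ix y c = Some (hmap (parr p f) n) /\ obj_ext ix d psi y.
Proof.
  assert (Hsat : forall y (u vc : hlist (car (pobj p y)) Db) vd,
    sat (pobj p y) (at_params_formula Db psi) (happ u (happ vc vd)) <->
    u = vc /\ sat (pobj p y) psi vd).
  { intros y u vc vd. cbn [at_params_formula sat].
    rewrite (sat_fEqs_eq _ _ _ _ _ _ u vc) by (intros; now rewrite ?hget_vinr, ?hget_vinl).
    rewrite (sat_rename _ _ psi _ _ _ vd) by (intros; now rewrite !hget_vinr).
    reflexivity. }
  split.
  - intros (y & al & v & Hv & Hs).
    apply pvals_happ in Hv as (vc & vd & Hc & Hd & ->).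
    apply Hsat in Hs as [Hn Hpsi].
    exists y, (ginv al). rewrite Hn. split; [easy|]. now exists vd.
  - intros (y & f & Hc & vd & Hd & Hpsi).
    exists y, (ginv f), (happ (hmap (parr p f) n) vd). rewrite ginv_ginv. split.
    + apply pvals_happ. eauto.
    + now apply Hsat.
Qed.

Lemma tau0_log_asrc_image (Helim : eliminates_parameters ix)
    Da Db Dd (a : hlist I Da) (b c : hlist I Db) (d : hlist I Dd) phi psi :
  tau0_log ix (fun x => exists e, log1_set a phi b c d psi e /\ asrc e = x).
Proof.
  destruct (Helim _ (happ c d) Db (at_params_formula Db psi)) as [phi0 Hphi0].
  assert (Hphi0b : forall x, obj_ext ix b phi0 x <->
            exists y (f : hom X x y), carries ix f b c /\ obj_ext ix d psi y).
  { intro x. unfold obj_ext at 1. unfold ext in Hphi0.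
    setoid_rewrite <- Hphi0. setoid_rewrite param_orbit_at_params. split.
    - intros (vb & Hb & y & f & Hc & Hd). exists y, f.
      split; [now exists vb, (hmap (parr p f) vb) | easy].
    - intros (y & f & (vb & vc & Hb & Hc & <-) & Hd). exists vb.
      split; [easy|]. now exists y, f. }
  apply (go_ext _ (fun x => obj_ext ix a phi x /\ obj_ext ix b phi0 x)).
  - intro x. rewrite Hphi0b. split.
    + intros [Ha (y & f & Hbc & Hd)]. now exists (mkarr f).
    + intros ([x' [y f]] & (Ha & Hbc & Hd) & <-). split; [easy|]. now exists y, f.
  - apply go_inter; apply tau0_log_obj_ext.
Qed.

Lemma open_map_asrc (Helim : eliminates_parameters ix) :
  open_map (tau1_log ix) (tau0_log ix) asrc.
Proof.
  apply open_map_gen_open; [apply log1_basic_full | apply log1_basic_inter |].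
  intros W HW. rewrite log1_basicP in HW. destruct HW as (Da & Db & Dd & a & b & c & d & phi & psi & HW).
  refine (go_ext _ _ _ _ (tau0_log_asrc_image Helim _ _ _ a b c d phi psi)).
  intro x. now setoid_rewrite HW.
Qed.

End LogicalTopology.

Theorem mainTheorem6 (Sg : signature) (T : theory Sg) (X : groupoid)
  (p : TModFunctor T X) (I : sort Sg -> Type) (ix : indexing I p) :
  eliminates_parameters ix ->
  open_topological_groupoid X (tau0_log ix) (tau1_log ix).
Proof.
  intro Helim. repeat split.
  - apply continuous_asrc.
  - apply continuous_atgt.
  - apply continuous_aid.
  - apply continuous_ainv.
  - apply continuous_ccomp.
  - now apply open_map_asrc.
Qed.
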